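(* Let $\gamma\in(1,3)$, $\mu\in(0,1)$, $K>0$, and $U_C=\frac{2\mu}{\gamma+1}$. Define $U^{\mathrm{sp}}=U^{\mathrm{sp}}(y)$ for $0<y<\infty$ by the implicit formula \[ y=K\frac{\big(\frac{2\mu}{\gamma+1}-U^{\mathrm{sp}}\big)^{\frac1\mu-1}}{(-U^{\mathrm{sp}})^{\frac1\mu}},\qquad 0<y<\infty,\ U^{\mathrm{sp}}<0. \] Then $U^{\mathrm{sp}}$ solves \[ y\frac{dU}{dy}=-\frac{[(\gamma+1)U-2\mu]U}{(\gamma+1)U-2}, \] satisfies $-\infty<U^{\mathrm{sp}}<0$ and $\lim_{y\to\infty}U^{\mathrm{sp}}(y)=0$. Moreover, \[ U^{\mathrm{sp}}(y)=-K^\mu U_C^{1-\mu}\frac{1}{y^\mu}+o\Big(\frac1{y^\mu}\Big)\ \text{ as }y\to\infty,\qquad U^{\mathrm{sp}}(y)=-\frac{K}{y}+o\Big(\frac1y\Big)\ \text{ as }y\to0^+. \] *)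

From Stdlib Require Import Reals.
From Coquelicot Require Import Coquelicot.
Open Scope R_scope.

Definition UC (gamma mu : R) : R := 2 * mu / (gamma + 1).

Definition Fsp (gamma mu K U : R) : R :=
  K * Rpower (UC gamma mu - U) (1 / mu - 1) / Rpower (- U) (1 / mu).

Definition ode_rhs (gamma mu U : R) : R :=
  - (((gamma + 1) * U - 2 * mu) * U) / ((gamma + 1) * U - 2).

From Pilot Require Import Defs.
From Stdlib Require Import Reals Lra Ranalysis5.
From Coquelicot Require Import Coquelicot.
Open Scope R_scope.

(* F(U) = K (U_C - U)^(1/mu - 1) / (-U)^(1/mu) is a strictly increasing continuous
   bijection from (-oo, 0) onto (0, oo): it is squeezed between K/(-U) and
   K 2^(1/mu - 1)/(-U) (the latter for -U >= U_C), and F'(U) = F(U) / ode_rhs(U) with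
   ode_rhs(U) > 0.  Hence U^sp = F^-1 exists, solves the ODE by the inverse function
   theorem and tends to 0 at infinity.  The two expansions are continuity statements
   after the exact rewritings
     F(U)^mu (-U) = K^mu (U_C - U)^(1-mu)   and   U F(U) + K = K - K (1 + U_C/(-U))^(1/mu - 1)
   at U = U^sp(y), since U^sp(y) -> 0 as y -> oo and U^sp(y) <= -K/y forces
   1/U^sp(y) -> 0 as y -> 0+. *)

Lemma Rpower_gt0 a e : 0 < Rpower a e.
Proof. apply exp_pos. Qed.

Lemma Rpower_1_base e : Rpower 1 e = 1.
Proof. unfold Rpower. rewrite ln_1, Rmult_0_r. apply exp_0. Qed.

Lemma Rpower_div a b e : 0 < a -> 0 < b -> Rpower (a / b) e = Rpower a e / Rpower b e.
Proof.
  intros ha hb. unfold Rpower, Rdiv. rewrite ln_mult, ln_Rinv by (auto with real).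
  rewrite Rmult_plus_distr_l, exp_plus, <- Ropp_mult_distr_r, exp_Ropp. reflexivity.
Qed.

Lemma ball_0_Rabs (eps : posreal) x : ball 0 eps x <-> Rabs x < eps.
Proof.
  unfold ball; simpl; unfold AbsRing_ball, abs, minus, plus, opp; simpl.
  rewrite Ropp_0, Rplus_0_r. tauto.
Qed.

Lemma derivable_pt_lim_inverse (f f' g : R -> R) (lb ub y : R) :
  lb < y < ub -> g lb <= g y <= g ub ->
  (forall u, g lb <= u <= g ub -> derivable_pt_lim f u (f' u)) ->
  continuity_pt g y ->
  (forall t, lb <= t <= ub -> f (g t) = t) ->
  f' (g y) <> 0 ->
  derivable_pt_lim g y (1 / f' (g y)).
Proof.
  intros hy hgy hf hg hfg hf'.
  set (Prf := fun u (hu : g lb <= u <= g ub) => exist _ (f' u) (hf u hu) : derivable_pt f u).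
  exact (derivable_pt_lim_recip_interv f g lb ub y Prf hg ltac:(lra) hy hgy hfg hf').
Qed.

Section InverseOnHalfLines.

Variables f g : R -> R.
Hypothesis f_increasing : forall u v, u < v -> v < 0 -> f u < f v.
Hypothesis g_neg : forall y, 0 < y -> g y < 0.
Hypothesis f_g : forall y, 0 < y -> f (g y) = y.

Lemma increasing_le u v : u <= v -> v < 0 -> f u <= f v.
Proof. intros [huv|heq] hv; [left; auto|right; now subst]. Qed.

Lemma inverse_le x y : 0 < x -> x <= y -> g x <= g y.
Proof.
  intros hx hxy. destruct (Rle_lt_dec (g x) (g y)) as [|hlt]; auto.
  pose proof (f_increasing _ _ hlt (g_neg x hx)). rewrite !f_g in * by lra. lra.
Qed.

Lemma inverse_lt x y : 0 < x -> x < y -> g x < g y.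
Proof.
  intros hx hxy. destruct (Rlt_le_dec (g x) (g y)) as [|hle]; auto.
  pose proof (increasing_le _ _ hle (g_neg x hx)). rewrite !f_g in * by lra. lra.
Qed.

Lemma inverse_continuous y :
  (forall u, u < 0 -> continuity_pt f u) -> 0 < y -> continuity_pt g y.
Proof.
  intros f_cont hy.
  assert (hlt : g (y / 2) < g (2 * y)) by (apply inverse_lt; lra).
  pose proof (g_neg (2 * y) ltac:(lra)).
  apply (continuity_pt_recip_interv f g _ _ hlt).
  - intros u v _ huv hv. apply f_increasing; lra.
  - intros t ht1 ht2. rewrite f_g in ht1, ht2 by lra. apply f_g. unfold id. lra.
  - intros t ht1 ht2. rewrite f_g in ht1, ht2 by lra. split; apply inverse_le; lra.
  - intros u hu. apply f_cont. lra.
  - rewrite !f_g by lra. lra.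
Qed.

Lemma inverse_derivable (f' : R -> R) y :
  (forall u, u < 0 -> continuity_pt f u) ->
  (forall u, u < 0 -> derivable_pt_lim f u (f' u)) ->
  0 < y -> f' (g y) <> 0 ->
  derivable_pt_lim g y (1 / f' (g y)).
Proof.
  intros f_cont f_deriv hy hf'.
  pose proof (g_neg (2 * y) ltac:(lra)).
  apply (derivable_pt_lim_inverse f f' g (y / 2) (2 * y)); auto.
  - lra.
  - split; apply inverse_le; lra.
  - intros u hu. apply f_deriv. lra.
  - apply inverse_continuous; auto.
  - intros t ht. apply f_g. lra.
Qed.

Lemma inverse_lim_pinfty :
  (forall u, u < 0 -> 0 < f u) -> filterlim g (Rbar_locally p_infty) (locally 0).
Proof.
  intros f_pos. apply filterlim_locally. intros eps.
  pose proof (cond_pos eps).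
  exists (f (- eps)). intros y hy. apply ball_0_Rabs.
  pose proof (f_pos (- eps) ltac:(lra)).
  assert (hy0 : 0 < y) by lra.
  pose proof (g_neg y hy0).
  rewrite Rabs_left by lra.
  destruct (Rlt_le_dec (- eps) (g y)) as [|hle]; [lra|].
  pose proof (increasing_le _ _ hle ltac:(lra)). rewrite f_g in * by lra. lra.
Qed.

End InverseOnHalfLines.

Section ImplicitFormula.

Variables gamma mu K : R.
Hypotheses (hg1 : 1 < gamma) (hm0 : 0 < mu) (hm1 : mu < 1) (hK : 0 < K).

Local Notation F := (Fsp gamma mu K).
Local Notation UC := (UC gamma mu).

Lemma UC_gt0 : 0 < UC.
Proof. unfold Defs.UC. apply Rdiv_lt_0_compat; lra. Qed.

Lemma inv_mu_sub1_gt0 : 0 < 1 / mu - 1.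
Proof.
  assert (1 < 1 / mu) by (apply (Rmult_lt_reg_l mu); [lra|]; field_simplify; lra).
  lra.
Qed.

Lemma Fsp_ratioE U : U < 0 -> F U = K * Rpower (1 + UC / - U) (1 / mu - 1) / - U.
Proof.
  intros hU. pose proof UC_gt0.
  replace (1 + UC / - U) with ((UC - U) / - U) by (field; lra).
  unfold Fsp. rewrite Rpower_div by lra.
  replace (1 / mu) with ((1 / mu - 1) + 1) at 2 by ring.
  rewrite Rpower_plus, Rpower_1 by lra.
  pose proof (Rpower_gt0 (- U) (1 / mu - 1)).
  field. lra.
Qed.

Lemma Fsp_gt0 U : U < 0 -> 0 < F U.
Proof.
  intros hU. pose proof UC_gt0. rewrite Fsp_ratioE by lra.
  pose proof (Rpower_gt0 (1 + UC / - U) (1 / mu - 1)).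
  apply Rdiv_lt_0_compat; [apply Rmult_lt_0_compat|]; lra.
Qed.

Lemma Fsp_increasing U V : U < V -> V < 0 -> F U < F V.
Proof.
  intros hUV hV. pose proof UC_gt0. pose proof inv_mu_sub1_gt0.
  rewrite !Fsp_ratioE by lra.
  assert (hinv : / - U < / - V) by (apply Rinv_lt_contravar; nra).
  assert (hratio : 1 + UC / - U < 1 + UC / - V).
  { unfold Rdiv. apply Rplus_lt_compat_l, Rmult_lt_compat_l; lra. }
  assert (0 < UC / - U) by (apply Rdiv_lt_0_compat; lra).
  assert (hpos : 0 < 1 + UC / - U) by lra.
  pose proof (Rlt_Rpower_l _ _ _ inv_mu_sub1_gt0 (conj hpos hratio)).
  pose proof (Rpower_gt0 (1 + UC / - U) (1 / mu - 1)).
  assert (0 < / - U) by (apply Rinv_0_lt_compat; lra).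
  unfold Rdiv. rewrite !Rmult_assoc. apply Rmult_lt_compat_l; [lra|].
  apply Rmult_le_0_lt_compat; lra.
Qed.

Lemma Fsp_lower_bound U : U < 0 -> K / - U <= F U.
Proof.
  intros hU. pose proof UC_gt0. rewrite Fsp_ratioE by lra.
  assert (0 <= UC / - U) by (left; apply Rdiv_lt_0_compat; lra).
  pose proof (Rle_Rpower_l 1 (1 + UC / - U) _ (Rlt_le _ _ inv_mu_sub1_gt0) ltac:(lra)).
  rewrite Rpower_1_base in *.
  unfold Rdiv. apply Rmult_le_compat_r; [left; apply Rinv_0_lt_compat; lra|]. nra.
Qed.

Lemma Fsp_upper_bound U : UC <= - U -> F U <= K * Rpower 2 (1 / mu - 1) / - U.
Proof.
  intros hU. pose proof UC_gt0. rewrite Fsp_ratioE by lra.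
  assert (UC / - U <= 1).
  { apply (Rmult_le_reg_r (- U)); [lra|]. field_simplify; lra. }
  assert (0 < UC / - U) by (apply Rdiv_lt_0_compat; lra).
  pose proof (Rle_Rpower_l (1 + UC / - U) 2 _ (Rlt_le _ _ inv_mu_sub1_gt0) ltac:(lra)).
  unfold Rdiv. apply Rmult_le_compat_r; [left; apply Rinv_0_lt_compat; lra|]. nra.
Qed.

Lemma ode_rhs_gt0 U : U < 0 -> 0 < ode_rhs gamma mu U.
Proof.
  intros hU. unfold ode_rhs.
  apply Rdiv_neg_neg; nra.
Qed.

Lemma Fsp_derivable U : U < 0 -> derivable_pt_lim F U (F U / ode_rhs gamma mu U).
Proof.
  intros hU. pose proof UC_gt0.
  apply is_derive_Reals. unfold Fsp, Rpower, Defs.UC in *. auto_derive.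
  - repeat split; try lra. apply Rgt_not_eq, exp_pos.
  - unfold ode_rhs.
    pose proof (exp_pos (1 / mu * ln (- U))).
    assert ((gamma + 1) * U - 2 * mu < 0) by nra.
    assert ((gamma + 1) * U - 2 < 0) by nra.
    replace (2 * mu / (gamma + 1) + - U) with (2 * mu / (gamma + 1) - U) by ring.
    field. repeat split; lra.
Qed.

Lemma Fsp_continuous U : U < 0 -> continuity_pt F U.
Proof. intros hU. apply derivable_continuous_pt. eexists. apply Fsp_derivable, hU. Qed.

Lemma Fsp_surjective y : 0 < y -> exists U, U < 0 /\ F U = y.
Proof.
  intros hy. pose proof UC_gt0 as hUC.
  set (M := K * Rpower 2 (1 / mu - 1)).
  assert (0 < M) by (apply Rmult_lt_0_compat; [lra|apply Rpower_gt0]).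
  assert (0 < M / y) by (apply Rdiv_lt_0_compat; lra).
  assert (0 < K / y) by (apply Rdiv_lt_0_compat; lra).
  set (lb := - (UC + M / y)). set (ub := - (K / y)).
  assert (hlb : F lb < y).
  { eapply Rle_lt_trans; [apply Fsp_upper_bound; unfold lb; lra|].
    fold M. unfold lb. rewrite Ropp_involutive.
    pose proof (Rmult_lt_0_compat UC y hUC hy).
    apply (Rmult_lt_reg_r (UC + M / y)); [lra|].
    replace (M / (UC + M / y) * (UC + M / y)) with M by (field; split; lra).
    replace (y * (UC + M / y)) with (UC * y + M) by (field; lra).
    lra. }
  assert (hub : y <= F ub).
  { eapply Rle_trans; [|apply Fsp_lower_bound; unfold ub; lra].
    unfold ub. right. field. lra. }
  assert (hlt : lb < ub).
  { destruct (Rlt_le_dec lb ub) as [|hle]; auto.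
    pose proof (increasing_le F Fsp_increasing ub lb hle ltac:(unfold lb; lra)). lra. }
  destruct (f_interv_is_interv F lb ub y hlt ltac:(lra)) as [U [hU hFU]].
  { intros U hU. apply Fsp_continuous. unfold ub in hU. lra. }
  exists U. unfold ub in hU. split; [lra|exact hFU].
Qed.

Lemma Fsp_Rpower_mu U : U < 0 ->
  Rpower (F U) mu * - U = Rpower K mu * Rpower (UC - U) (1 - mu).
Proof.
  intros hU. pose proof UC_gt0.
  pose proof (Rpower_gt0 (UC - U) (1 / mu - 1)).
  pose proof (Rpower_gt0 (- U) (1 / mu)).
  unfold Fsp. rewrite Rpower_div, <- Rpower_mult_distr, !Rpower_mult
    by (try apply Rmult_lt_0_compat; lra).
  replace ((1 / mu - 1) * mu) with (1 - mu) by (field; lra).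
  replace (1 / mu * mu) with 1 by (field; lra).
  rewrite Rpower_1 by lra. field. lra.
Qed.

Lemma Fsp_inj U V : U < 0 -> V < 0 -> F U = F V -> U = V.
Proof.
  intros hU hV hUV.
  destruct (Rtotal_order U V) as [hlt|[heq|hgt]]; auto.
  - pose proof (Fsp_increasing U V hlt hV). lra.
  - pose proof (Fsp_increasing V U hgt hU). lra.
Qed.

Variable Usp : R -> R.
Hypothesis Usp_spec : forall y, 0 < y -> Usp y < 0 /\ y = F (Usp y).

Lemma Usp_neg y : 0 < y -> Usp y < 0.
Proof. intros hy. apply Usp_spec, hy. Qed.

Lemma Fsp_Usp y : 0 < y -> F (Usp y) = y.
Proof. intros hy. symmetry. apply Usp_spec, hy. Qed.

Lemma Usp_derivable y : 0 < y -> derivable_pt_lim Usp y (ode_rhs gamma mu (Usp y) / y).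
Proof.
  intros hy. pose proof (ode_rhs_gt0 (Usp y) (Usp_neg y hy)).
  replace (ode_rhs gamma mu (Usp y) / y)
    with (1 / (F (Usp y) / ode_rhs gamma mu (Usp y))) by (rewrite Fsp_Usp by lra; field; lra).
  apply (inverse_derivable F Usp Fsp_increasing Usp_neg Fsp_Usp
           (fun U => F U / ode_rhs gamma mu U)); auto.
  - exact Fsp_continuous.
  - exact Fsp_derivable.
  - rewrite Fsp_Usp by lra. apply Rgt_not_eq, Rdiv_lt_0_compat; lra.
Qed.

Lemma Usp_lim_pinfty : filterlim Usp (Rbar_locally p_infty) (locally 0).
Proof. exact (inverse_lim_pinfty F Usp Fsp_increasing Usp_neg Fsp_Usp Fsp_gt0). Qed.

Lemma Usp_asymptotics_pinfty :
  filterlim (fun y => (Usp y + Rpower K mu * Rpower UC (1 - mu) / Rpower y mu) * Rpower y mu)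
    (Rbar_locally p_infty) (locally 0).
Proof.
  pose proof UC_gt0.
  set (gap := fun U => Rpower K mu * Rpower UC (1 - mu) - Rpower K mu * Rpower (UC - U) (1 - mu)).
  apply filterlim_ext_loc with (fun y => gap (Usp y)).
  - exists 0. intros y hy.
    pose proof (Fsp_Rpower_mu (Usp y) (Usp_neg y hy)) as E. rewrite Fsp_Usp in E by lra.
    pose proof (Rpower_gt0 y mu).
    unfold gap. rewrite <- E. field. lra.
  - apply filterlim_comp with (locally 0); [exact Usp_lim_pinfty|].
    replace 0 with (gap 0) at 2 by (unfold gap; rewrite Rminus_0_r; ring).
    apply (@ex_derive_continuous R_AbsRing R_NormedModule). unfold gap, Rpower. auto_derive. lra.
Qed.

Lemma Usp_upper_bound y : 0 < y -> Usp y <= - (K / y).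
Proof.
  intros hy. pose proof (Usp_neg y hy).
  pose proof (Fsp_lower_bound (Usp y) (Usp_neg y hy)) as hb. rewrite Fsp_Usp in hb by lra.
  apply (Rmult_le_reg_r y); [lra|].
  apply (Rmult_le_compat_r (- Usp y)) in hb; [|lra].
  replace (K / - Usp y * - Usp y) with K in hb by (field; lra).
  replace (- (K / y) * y) with (- K) by (field; lra).
  lra.
Qed.

Lemma Usp_inv_lim_0 : filterlim (fun y => / - Usp y) (at_right 0) (locally 0).
Proof.
  apply (filterlim_le_le (fun _ => 0) _ (fun y => y / K) 0).
  - exists (mkposreal 1 Rlt_0_1). intros y _ hy.
    pose proof (Usp_upper_bound y hy). pose proof (Usp_neg y hy).
    assert (0 < K / y) by (apply Rdiv_lt_0_compat; lra).
    split; [left; apply Rinv_0_lt_compat; lra|].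
    replace (y / K) with (/ (K / y)) by (field; lra).
    apply Rinv_le_contravar; lra.
  - apply filterlim_const.
  - apply (filterlim_filter_le_1 (F := locally 0)); [intros P; apply filter_le_within|].
    replace (Finite 0) with (Finite (0 / K)) by (f_equal; field; lra).
    apply (@ex_derive_continuous R_AbsRing R_NormedModule). auto_derive. lra.
Qed.

Lemma Usp_asymptotics_0 : filterlim (fun y => (Usp y + K / y) * y) (at_right 0) (locally 0).
Proof.
  pose proof UC_gt0.
  set (gap := fun W => K - K * Rpower (1 + UC * W) (1 / mu - 1)).
  apply filterlim_ext_loc with (fun y => gap (/ - Usp y)).
  - exists (mkposreal 1 Rlt_0_1). intros y _ hy.
    pose proof (Usp_neg y hy).
    pose proof (Fsp_ratioE (Usp y) (Usp_neg y hy)) as E. rewrite Fsp_Usp in E by lra.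
    set (U := Usp y) in *. clearbody U.
    replace ((U + K / y) * y) with (U * y + K) by (field; lra).
    unfold gap. rewrite E. unfold Rdiv. field. lra.
  - apply filterlim_comp with (locally 0); [exact Usp_inv_lim_0|].
    replace 0 with (gap 0) at 2 by (unfold gap; rewrite Rmult_0_r, Rplus_0_r, Rpower_1_base; ring).
    apply (@ex_derive_continuous R_AbsRing R_NormedModule). unfold gap, Rpower. auto_derive. lra.
Qed.

End ImplicitFormula.

Theorem lemma3p6 (gamma mu K : R)
  (hg1 : 1 < gamma) (hg3 : gamma < 3) (hm0 : 0 < mu) (hm1 : mu < 1) (hK : 0 < K) :
  (* the implicit formula defines a unique negative value for every y > 0 *)
  (forall y : R, 0 < y -> exists! U : R, U < 0 /\ y = Fsp gamma mu K U) /\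
  (* and the function so defined has the stated properties *)
  (forall Usp : R -> R,
     (forall y : R, 0 < y -> Usp y < 0 /\ y = Fsp gamma mu K (Usp y)) ->
     (forall y : R, 0 < y ->
        derivable_pt_lim Usp y (ode_rhs gamma mu (Usp y) / y)) /\
     (forall y : R, 0 < y -> Usp y < 0) /\
     filterlim Usp (Rbar_locally p_infty) (locally 0) /\
     filterlim
       (fun y => (Usp y + Rpower K mu * Rpower (UC gamma mu) (1 - mu) / Rpower y mu)
                 * Rpower y mu)
       (Rbar_locally p_infty) (locally 0) /\
     filterlim (fun y => (Usp y + K / y) * y) (at_right 0) (locally 0)).
Proof.
  split.
  - intros y hy.
    destruct (Fsp_surjective gamma mu K hg1 hm0 hm1 hK y hy) as [U [hU hFU]].
    exists U. split; [split; auto|].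
    intros V [hV hFV]. apply (Fsp_inj gamma mu K hg1 hm0 hm1 hK); congruence.
  - intros Usp hUsp. repeat split.
    + apply (Usp_derivable gamma mu K hg1 hm0 hm1 hK Usp hUsp).
    + apply (Usp_neg gamma mu K Usp hUsp).
    + apply (Usp_lim_pinfty gamma mu K hg1 hm0 hm1 hK Usp hUsp).
    + apply (Usp_asymptotics_pinfty gamma mu K hg1 hm0 hm1 hK Usp hUsp).
    + apply (Usp_asymptotics_0 gamma mu K hg1 hm0 hm1 hK Usp hUsp).
Qed.
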